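(* Let $\mathcal{G}_n$ be the set of binary words $w=w_1\cdots w_{2n}$ with $n$ zeros and $n$ ones. For $w\in\mathcal{G}_n$ let $o_{00}(w)=|\{i\in[n]: w_{2i-1}w_{2i}=00\}|$, $o_0(w)=|\{i\in[n]: w_{2i-1}=0\}|$, $\#_{001}(w)$ the number of occurrences of $001$ as a consecutive subword of $w$, and $\#_{01}(w)$ the number of occurrences of $01$ as a consecutive subword of $w$. Then there is a bijection $\phi:\mathcal{G}_n\to\mathcal{G}_n$ such that for all $w\in\mathcal{G}_n$, $$o_{00}(w)=\#_{001}(\phi(w))\quad\text{and}\quad o_0(w)=\#_{01}(\phi(w)).$$
   Context: $[n]=\{1,2,\dots,n\}$. *)

From mathcomp Require Import all_boot.
Set Implicit Arguments. Unset Strict Implicit. Unset Printing Implicit Defensive.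

(* Binary words: a letter is a bool, with false = 0 and true = 1.
   Positions are 0-based: w_{k} (1-based) is nth false w (k-1). *)

Definition inG (n : nat) (w : seq bool) : bool :=
  (size w == n.*2) && (count_mem false w == n) && (count_mem true w == n).

Definition Gn (n : nat) := {w : seq bool | inG n w}.

Definition letter (w : seq bool) (k : nat) : bool := nth false w k.

Definition o00 (n : nat) (w : seq bool) : nat :=
  #|[set i : 'I_n | (letter w i.*2 == false) && (letter w i.*2.+1 == false)]|.

Definition o0 (n : nat) (w : seq bool) : nat :=
  #|[set i : 'I_n | letter w i.*2 == false]|.

Definition occ (p w : seq bool) : nat :=
  count (fun k => take (size p) (drop k w) == p) (iota 0 (size w - size p).+1).

Definition occ001 (w : seq bool) : nat := occ [:: false; false; true] w.
Definition occ01 (w : seq bool) : nat := occ [:: false; true] w.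

From mathcomp Require Import all_boot.
Set Implicit Arguments. Unset Strict Implicit. Unset Printing Implicit Defensive.

(* A word u is determined by two bit vectors: the letters following its 0s
   ([after_zeros u], with 0 after a final 0) and, for each 1, whether it
   follows a 0 ([zero_before_ones false u]).  For u in G_n both have length n
   and weight #01(u), and x := after_zeros u satisfies #01(x) = #001(u).
   Encoding x the same way, a := zero_before_ones false x has length #01(u)
   and weight #001(u), while after_zeros x has length n - #01(u).  With
   s := zero_before_ones false u, let t carry a on the positions where s is 1
   and the complement of after_zeros x elsewhere.  The word psi u whose i-th
   pair of letters has zero pattern (s_i, t_i) lies in G_n, has
   o_0 = #01(u) and o_00 = #001(u), and determines u.  So psi injects the
   finite set G_n into itself, and phi := psi^-1. *)

Lemma card_nth (T : Type) (x0 : T) (p : pred T) (s : seq T) :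
  #|[set i : 'I_(size s) | p (nth x0 s i)]| = count p s.
Proof.
rewrite -sum1_card.
rewrite (eq_bigl (fun i : 'I_(size s) => p (nth x0 s i))) => [|i]; last by rewrite inE.
rewrite -(big_mkord (fun i => p (nth x0 s i)) (fun=> 1)) sum1_count.
by rewrite -[in RHS](mkseq_nth x0 s) /mkseq count_map /index_iota subn0.
Qed.

Lemma count_id_negb (s : seq bool) : count id s + count negb s = size s.
Proof. exact: count_predC. Qed.

Lemma occ_cons p a u : 0 < size p ->
  occ p (a :: u) = (take (size p) (a :: u) == p) + occ p u.
Proof.
move=> p_gt0; rewrite /occ [size (a :: u)]/=.
have [le_pu | lt_up] := leqP (size p) (size u).
  rewrite subSn //; set m := size u - size p.
  by rewrite -[iota 0 m.+2]/(0 :: iota (1 + 0) m.+1) iotaDl /= count_map.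
have /eqP -> : (size u).+1 - size p == 0 by rewrite subn_eq0.
have /eqP -> : size u - size p == 0 by rewrite subn_eq0 ltnW.
rewrite /= drop0; have -> // : (take (size p) u == p) = false.
by rewrite take_oversize ?(ltnW lt_up) //; apply/eqP => u_p; rewrite u_p ltnn in lt_up.
Qed.

Lemma occ01_cons a u : occ01 (a :: u) = (~~ a && head false u) + occ01 u.
Proof. by rewrite /occ01 occ_cons //; case: a; case: u => [|[] [|? ?]]. Qed.

Lemma occ001_cons a u :
  occ001 (a :: u) = (take 3 (a :: u) == [:: false; false; true]) + occ001 u.
Proof. exact: occ_cons. Qed.

Fixpoint after_zeros (u : seq bool) : seq bool :=
  match u with
  | [::] => [::]
  | false :: u' => head false u' :: after_zeros u'
  | true :: u' => after_zeros u'
  end.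

Fixpoint zero_before_ones (prev0 : bool) (u : seq bool) : seq bool :=
  match u with
  | [::] => [::]
  | false :: u' => zero_before_ones true u'
  | true :: u' => prev0 :: zero_before_ones false u'
  end.

Lemma size_after_zeros u : size (after_zeros u) = count negb u.
Proof. by elim: u => [|[] u IH] //=; rewrite IH. Qed.

Lemma count_after_zeros u : count id (after_zeros u) = occ01 u.
Proof. by elim: u => [|[] u IH] //; rewrite occ01_cons /= IH. Qed.

Lemma size_zero_before_ones b u : size (zero_before_ones b u) = count id u.
Proof. by elim: u b => [|[] u IH] b //=; rewrite IH. Qed.

Lemma count_zero_before_ones b u :
  count id (zero_before_ones b u) = (b && head false u) + occ01 u.
Proof.
elim: u b => [|[] u IH] b; first by rewrite andbF.
  by rewrite occ01_cons /= IH andbT.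
by rewrite occ01_cons /= IH andbF.
Qed.

Lemma occ01_after_zeros u : occ01 (after_zeros u) = occ001 u.
Proof.
elim: u => [|[] u IH] //; first by rewrite occ001_cons /= IH.
rewrite occ001_cons /= occ01_cons IH; congr (_ + _).
by case: u {IH} => [|[] [|[] u]] //=; rewrite take0.
Qed.

Lemma head_zero_before_ones u : head true (zero_before_ones true u) = true.
Proof. by elim: u => [|[] u IH]. Qed.

(* Knowing the first letter c keeps the induction going: after a 0 the next
   letter is recorded by [after_zeros]; after a 1 it is 1 exactly when
   [zero_before_ones false] starts with [false]. *)
Lemma zero_code_cons_inj c b u1 u2 :
  after_zeros (c :: u1) = after_zeros (c :: u2) ->
  zero_before_ones b (c :: u1) = zero_before_ones b (c :: u2) -> u1 = u2.
Proof.
elim: u1 c b u2 => [|d1 u1 IH] c b [|d2 u2] //.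
- by case: c => /=; case: d2 => //= _ [].
- by case: c => /=; case: d1 => //= _ [].
case: c => /= [azE [zbE] | [<-] azE zbE]; last by rewrite (IH d1 true u2).
have d12 : d1 = d2.
  case: d1 d2 azE zbE => [] [] //= _ /(congr1 (head true));
    by rewrite head_zero_before_ones.
by rewrite -d12 in azE zbE *; rewrite (IH d1 false u2).
Qed.

Definition zero_code (u : seq bool) := (after_zeros u, zero_before_ones false u).

Lemma zero_code_inj : injective zero_code.
Proof.
move=> u1 u2 [azE zbE]; apply: (@zero_code_cons_inj true false) => //=.
by rewrite zbE.
Qed.

Section Interleave.
Variables (T : Type) (x0 : T).

Fixpoint interleave (m : bitseq) (a b : seq T) : seq T :=
  match m with
  | [::] => [::]
  | true :: m' => head x0 a :: interleave m' (behead a) b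
  | false :: m' => head x0 b :: interleave m' a (behead b)
  end.

Lemma size_interleave m a b : size (interleave m a b) = size m.
Proof. by elim: m a b => [|[] m IH] a b /=; rewrite ?IH. Qed.

Lemma mask_interleave m a b : size a = count id m -> size b = count negb m ->
  mask m (interleave m a b) = a /\ mask (map negb m) (interleave m a b) = b.
Proof.
elim: m a b => [|[] m IH] a b /=.
- by case: a; case: b.
- by case: a => [|y a] //= [/IH sa] /sa [-> ->].
- by case: b => [|y b] //= /IH sa [/sa [-> ->]].
Qed.

Lemma count_interleave (p : pred T) m a b :
  size a = count id m -> size b = count negb m ->
  count p (interleave m a b) = count p a + count p b.
Proof.
elim: m a b => [|[] m IH] a b /=.
- by case: a; case: b.
- by case: a => [|y a] //= [/IH sa] /sa ->; rewrite addnA.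
- by case: b => [|y b] //= /IH sa [/sa ->]; rewrite addnCA.
Qed.

End Interleave.

Fixpoint word_of_zero_flags (s t : seq bool) : seq bool :=
  match s, t with
  | x :: s', y :: t' => ~~ x :: ~~ y :: word_of_zero_flags s' t'
  | _, _ => [::]
  end.

Lemma size_word_of_zero_flags s t :
  size (word_of_zero_flags s t) = (size (zip s t)).*2.
Proof. by elim: s t => [|x s IH] [|y t] //=; rewrite IH doubleS. Qed.

Lemma count_word_of_zero_flags s t : size s = size t ->
  count negb (word_of_zero_flags s t) = count id s + count id t.
Proof.
elim: s t => [|x s IH] [|y t] //= [/IH ->].
by rewrite !negbK addnACA addnA.
Qed.

Lemma letter_word_of_zero_flags s t i :
  letter (word_of_zero_flags s t) i.*2 = ~~ (nth (true, true) (zip s t) i).1 /\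
  letter (word_of_zero_flags s t) i.*2.+1 = ~~ (nth (true, true) (zip s t) i).2.
Proof. by elim: s t i => [|x s IH] [|y t] [|i] //=; rewrite doubleS. Qed.

Lemma word_of_zero_flags_inj s1 t1 s2 t2 :
  size s1 = size t1 -> size s2 = size t2 ->
  word_of_zero_flags s1 t1 = word_of_zero_flags s2 t2 -> s1 = s2 /\ t1 = t2.
Proof.
elim: s1 t1 s2 t2 => [|x1 s1 IH] [|y1 t1] [|x2 s2] [|y2 t2] //= [st1] [st2].
by case=> /negb_inj -> /negb_inj -> /(IH _ _ _ st1 st2) [-> ->].
Qed.

Lemma count_zip_fst (s t : seq bool) : size s = size t ->
  count fst (zip s t) = count id s.
Proof. by move=> st; rewrite -[in RHS](unzip1_zip (eq_leq st)) count_map. Qed.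

Lemma count_zip_and (s t : seq bool) :
  count (fun q => q.1 && q.2) (zip s t) = count id (mask s t).
Proof. by elim: s t => [|[] s IH] [|y t] //=; rewrite IH. Qed.

Lemma o0_word_of_zero_flags n s t : size s = n -> size t = n ->
  o0 n (word_of_zero_flags s t) = count id s.
Proof.
move=> <- /esym st; have zipE : size (zip s t) = size s by rewrite size_zip st minnn.
rewrite /o0 -zipE -(count_zip_fst st) -(card_nth (true, true)).
apply: eq_card => i; rewrite !inE (letter_word_of_zero_flags s t i).1.
by case: (nth _ _ _) => [[] ?].
Qed.

Lemma o00_word_of_zero_flags n s t : size s = n -> size t = n ->
  o00 n (word_of_zero_flags s t) = count id (mask s t).
Proof.
move=> <- /esym st; have zipE : size (zip s t) = size s by rewrite size_zip st minnn.
rewrite /o00 -zipE -count_zip_and -(card_nth (true, true)).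
apply: eq_card => i; rewrite !inE.
have [-> ->] := letter_word_of_zero_flags s t i.
by case: (nth _ _ _) => [[] []].
Qed.

Lemma inGE n w : inG n w = (count negb w == n) && (count id w == n).
Proof.
rewrite /inG -(count_id_negb w).
have -> : count_mem false w = count negb w by apply: eq_count => -[].
have -> : count_mem true w = count id w by apply: eq_count => -[].
case: (count negb w =P n) => [->|]; case: (count id w =P n) => [->|];
  by rewrite ?addnn ?eqxx ?andbF.
Qed.

Definition psi (u : seq bool) : seq bool :=
  let s := zero_before_ones false u in
  let x := after_zeros u in
  word_of_zero_flags s
    (interleave false s (zero_before_ones false x) (map negb (after_zeros x))).

Section Psi.
Variables (n : nat) (u : seq bool).
Hypothesis u_in : inG n u.

Let s := zero_before_ones false u.
Let x := after_zeros u.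
Let a := zero_before_ones false x.
Let b := map negb (after_zeros x).
Let t := interleave false s a b.

Let zeros_u : count negb u = n. Proof. by move: u_in; rewrite inGE => /andP [/eqP]. Qed.
Let ones_u : count id u = n. Proof. by move: u_in; rewrite inGE => /andP [_ /eqP]. Qed.
Let count_s : count id s = occ01 u := count_zero_before_ones false u.

Lemma size_psi_flags : size s = n /\ size t = n.
Proof. by rewrite size_interleave /s size_zero_before_ones ones_u. Qed.

Let occ01_le : occ01 u <= n.
Proof. by rewrite -count_s -(proj1 size_psi_flags) count_size. Qed.

Let count_x : count id x = occ01 u /\ count negb x = n - occ01 u.
Proof.
rewrite /x count_after_zeros; split=> //.
rewrite -[n]zeros_u -(size_after_zeros u) -(count_id_negb (after_zeros u)).
by rewrite count_after_zeros addKn.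
Qed.

Let size_a : size a = count id s.
Proof. by rewrite size_zero_before_ones (proj1 count_x) count_s. Qed.

Let size_b : size b = count negb s.
Proof.
rewrite size_map size_after_zeros (proj2 count_x).
by rewrite -(proj1 size_psi_flags) -(count_id_negb s) count_s addKn.
Qed.

Lemma mask_psi_flags : mask s t = a /\ mask (map negb s) t = b.
Proof. exact: (mask_interleave false size_a size_b). Qed.

Lemma count_psi_flags : count id s = occ01 u /\ count id t = n - occ01 u.
Proof.
split=> //; rewrite (count_interleave false id size_a size_b) count_zero_before_ones.
rewrite /b count_map.
rewrite -(proj2 count_x) -(size_after_zeros x) -(count_id_negb (after_zeros x)).
by rewrite count_after_zeros.
Qed.

Lemma psi_inG : inG n (psi u).
Proof.
have [[size_s size_t] [weight_s weight_t]] := (size_psi_flags, count_psi_flags).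
have st : size s = size t by rewrite size_s size_t.
have zeros_psi : count negb (psi u) = n.
  by rewrite (count_word_of_zero_flags st) weight_s weight_t (subnKC occ01_le).
have := count_id_negb (psi u).
rewrite inGE zeros_psi eqxx size_word_of_zero_flags size_zip st minnn size_t -addnn /=.
by move/eqP; rewrite eqn_add2r.
Qed.

Lemma o0_psi : o0 n (psi u) = occ01 u.
Proof.
have [size_s size_t] := size_psi_flags.
by rewrite (o0_word_of_zero_flags size_s size_t) (proj1 count_psi_flags).
Qed.

Lemma o00_psi : o00 n (psi u) = occ001 u.
Proof.
have [size_s size_t] := size_psi_flags.
rewrite (o00_word_of_zero_flags size_s size_t) (proj1 mask_psi_flags).
by rewrite count_zero_before_ones occ01_after_zeros.
Qed.

End Psi.

Lemma psi_inj n u1 u2 : inG n u1 -> inG n u2 -> psi u1 = psi u2 -> u1 = u2.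
Proof.
move=> u1_in u2_in psiE.
have [[s1_n t1_n] [s2_n t2_n]] := (size_psi_flags u1_in, size_psi_flags u2_in).
have [sE tE] := word_of_zero_flags_inj
  (etrans s1_n (esym t1_n)) (etrans s2_n (esym t2_n)) psiE.
have [a1E b1E] := mask_psi_flags u1_in; have [a2E b2E] := mask_psi_flags u2_in.
have xE : after_zeros u1 = after_zeros u2.
  apply: zero_code_inj; congr pair; last by rewrite -a1E -a2E tE sE.
  by apply: (inj_map negb_inj); rewrite -b1E -b2E tE sE.
by apply: zero_code_inj; congr pair.
Qed.

Lemma injF_bij_can (T : Type) (F : finType) (e : T -> F) (e' : F -> T) :
  cancel e e' -> cancel e' e -> forall f : T -> T, injective f -> bijective f.
Proof.
move=> eK e'K f f_inj.
have /injF_bij [g gK Kg] : injective (e \o f \o e').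
  by move=> y1 y2 /= /(can_inj eK) /f_inj /(can_inj e'K).
exists (e' \o g \o e) => z /=; first by rewrite -[z in f z]eK gK eK.
by apply: (can_inj eK); exact: Kg.
Qed.

Lemma inG_size n w : inG n w -> size w == n.*2.
Proof. by case/andP => /andP []. Qed.

(* [Gn n] is a subtype of [seq bool], hence not a finType: transport along
   its bijection with a subtype of tuples. *)
Lemma Gn_injF_bij n (f : Gn n -> Gn n) : injective f -> bijective f.
Proof.
pose F := {t : (n.*2).-tuple bool | inG n t}.
pose e (w : Gn n) : F := exist _ (Tuple (inG_size (valP w))) (valP w).
pose e' (t : F) : Gn n := exist _ (val (val t)) (valP t).
apply: (@injF_bij_can _ _ e e') => [w | t]; first exact: val_inj.
by do 2 apply: val_inj.
Qed.

Theorem theorem3p4 (n : nat) :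
  exists phi : Gn n -> Gn n,
    bijective phi /\
    forall w : Gn n,
      o00 n (val w) = occ001 (val (phi w)) /\ o0 n (val w) = occ01 (val (phi w)).
Proof.
pose psiG (w : Gn n) : Gn n := exist _ (psi (val w)) (psi_inG (valP w)).
have psiG_inj : injective psiG.
  by move=> w1 w2 [] /(psi_inj (valP w1) (valP w2)) /val_inj.
have [phi psiK phiK] := Gn_injF_bij psiG_inj.
exists phi; split; first by exists psiG.
move=> w; rewrite -(phiK w) psiK /psiG /=.
by split; [apply: o00_psi | apply: o0_psi]; apply: valP.
Qed.
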